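(* Let $P_1,P_2\in\mathcal P_f$ satisfy $P_1^X=P_2^X$, $P_1^Y=P_2^Y$ and $OR(P_1)=OR(P_2)$ (i.e. their odds ratio functions agree $P_1^X\times P_1^Y$-almost everywhere). Then $P_1=P_2$.
   Context: Let $(\Omega_X,\mathcal B_X)$, $(\Omega_Y,\mathcal B_Y)$ be nonempty measurable spaces, $\Omega=\Omega_X\times\Omega_Y$ with the product $\sigma$-algebra, and $\mathcal P$ the set of probability measures on $\Omega$. For $P\in\mathcal P$ let $P^X,P^Y$ be its marginals and $P^{XY}=P^X\times P^Y$. Let $\mathcal P_{\ll}=\{P\in\mathcal P: P\ll P^{XY}\ll P\}$. For $P\in\mathcal P_\ll$ with (positive) density $p=dP/dP^{XY}$ and fixed reference points $x^\circ\in\Omega_X$, $y^\circ\in\Omega_Y$, the odds ratio function is $OR_p(x,y)=\dfrac{p(x,y)\,p(x^\circ,y^\circ)}{p(x,y^\circ)\,p(x^\circ,y)}$; it is determined up to $P^{XY}$-a.e. equality and denoted $OR(P)$. The Kullback–Leibler information is $I(Q\mid P)=\int\log(dQ/dP)\,dQ$. Let $\mathcal P_f=\{P\in\mathcal P_\ll: I(P^{XY}\mid P)<\infty\}$, i.e. $\log p$ is $P^{XY}$-integrable. *)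

From HB Require Import structures.
From mathcomp Require Import all_boot all_order all_algebra.
From mathcomp Require Import all_classical all_reals all_analysis.
Set Implicit Arguments. Unset Strict Implicit. Unset Printing Implicit Defensive.
Import Order.TTheory GRing.Theory Num.Theory.
Local Open Scope classical_set_scope.
Local Open Scope ring_scope.

Section odds.
Context (R : realType) (d1 d2 : measure_display)
  (TX : measurableType d1) (TY : measurableType d2).

Definition margX (P : set (TX * TY) -> \bar R) : set TX -> \bar R :=
  pushforward P fst.
Definition margY (P : set (TX * TY) -> \bar R) : set TY -> \bar R :=
  pushforward P snd.

Definition PXY (P : set (TX * TY) -> \bar R) : set (TX * TY) -> \bar R :=
  (margX P \x margY P)%E.

(* P is in P_<< (P << P^{XY} << P) and p is a positive version of dP/dP^{XY} *)
Definition Pll_density (P : set (TX * TY) -> \bar R) (p : TX * TY -> R) :=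
  [/\ P `<< PXY P, PXY P `<< P,
      measurable_fun [set: TX * TY] p,
      (forall z, 0 < p z) &
      (forall A, measurable A -> P A = (\int[PXY P]_(z in A) (p z)%:E)%E)].

Definition Pf_density (P : set (TX * TY) -> \bar R) (p : TX * TY -> R) :=
  Pll_density P p /\ (PXY P).-integrable [set: TX * TY] (fun z => (ln (p z))%:E).

Definition OR (x0 : TX) (y0 : TY) (p : TX * TY -> R) (z : TX * TY) : R :=
  p z * p (x0, y0) / (p (z.1, y0) * p (x0, z.2)).

End odds.

From HB Require Import structures.
From mathcomp Require Import all_boot all_order all_algebra.
From mathcomp Require Import all_classical all_reals all_analysis.
From mathcomp Require Import lra measurable_realfun.
Set Implicit Arguments. Unset Strict Implicit. Unset Printing Implicit Defensive.
Import Order.TTheory GRing.Theory Num.Theory.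
Local Open Scope classical_set_scope.
Local Open Scope ring_scope.

(* Let Q := P1^X x P1^Y, which equals P2^X x P2^Y; both P_i have positive
   densities p_i with respect to Q.  Equality of the odds ratios says that
   r := ln p1 - ln p2 is additively separable, r(x,y) = u(x) + v(y), and by
   Fubini the Q-integrability of r makes u and v integrable for the marginals.
   As P1 and P2 share their marginals, r has the same expectation under both,
   i.e. \int (p1 - p2) r dQ = 0.  The integrand (p1 - p2)(ln p1 - ln p2) is
   nonnegative, so it vanishes Q-a.e., whence p1 = p2 Q-a.e. *)

Section density.
Local Open Scope ereal_scope.
Context d (T : measurableType d) (R : realType).
Variables (mu : {sigma_finite_measure set T -> \bar R})
  (nu : {finite_measure set T -> \bar R}) (g : T -> R).
Hypotheses (mg : measurable_fun setT g) (g_ge0 : forall x, (0 <= g x)%R)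
  (nuE : forall A, measurable A -> nu A = \int[mu]_(x in A) (g x)%:E).

Let nu_dominated : nu `<< mu.
Proof.
move=> N nullN A mA AN; rewrite nuE//; apply: null_set_integral => //.
- exact/measurable_EFinP/measurable_funTS.
- exact: nullN.
Qed.

Let integrable_g : mu.-integrable setT (EFin \o g).
Proof.
apply/integrableP; split; first exact/measurable_EFinP.
under eq_integral do rewrite /= ger0_norm//.
by rewrite -nuE// ltey_eq fin_num_measure.
Qed.

Lemma density_ae_Radon_Nikodym :
  ae_eq mu setT (EFin \o g) (Radon_Nikodym (charge_of_finite_measure nu) mu).
Proof.
apply: integral_ae_eq => //.
move=> E _ mE; rewrite -nuE// -Radon_Nikodym_integral//.
Qed.

(* Transported from the library's change of variables for the Radon-Nikodym
   derivative, with which g agrees a.e. *)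
Lemma integral_density (f : T -> \bar R) : nu.-integrable setT f ->
  \int[mu]_x (f x * (g x)%:E) = \int[nu]_x f x.
Proof.
move=> intf; rewrite -(Radon_Nikodym_change_of_variables nu_dominated measurableT intf).
apply: ae_eq_integral => //.
- apply: emeasurable_funM; [exact: measurable_int intf|exact/measurable_EFinP].
- apply: emeasurable_funM; first exact: measurable_int intf.
  exact: measurable_int (Radon_Nikodym_integrable _).
- exact: ae_eqe_mul2l density_ae_Radon_Nikodym.
Qed.

Lemma integrable_density (f : T -> \bar R) : nu.-integrable setT f ->
  mu.-integrable setT (fun x => f x * (g x)%:E).
Proof.
move=> intf; apply/integrableP; split.
  apply: emeasurable_funM; [exact: measurable_int intf|exact/measurable_EFinP].
under eq_integral => x _ do rewrite abseM [`|(g x)%:E|]gee0_abs ?lee_fin//.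
rewrite (integral_density (integrable_abse intf)).
by case/integrableP : intf.
Qed.

End density.

Lemma eq_measure_integrable d (T : measurableType d) (R : realType)
    (m1 m2 : {measure set T -> \bar R}) (D : set T) (f : T -> \bar R) :
  (forall A, measurable A -> m1 A = m2 A) ->
  m1.-integrable D f -> m2.-integrable D f.
Proof.
move=> m12 /integrableP[mf intf]; apply/integrableP; split => //.
by rewrite (eq_measure_integral m1)// => A mA _; rewrite m12.
Qed.

Lemma ae_eq_integrable d (T : measurableType d) (R : realType)
    (mu : {measure set T -> \bar R}) (f g : T -> \bar R) :
  measurable_fun setT g -> ae_eq mu setT f g ->
  mu.-integrable setT f -> mu.-integrable setT g.
Proof.
move=> mg fg /integrableP[mf intf]; apply/integrableP; split => //.
rewrite -(@ae_eq_integral _ _ _ mu setT (abse \o g) (abse \o f))//.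
- exact: measurableT_comp.
- exact: measurableT_comp.
- exact: ae_eq_comp fg.
Qed.

Section integrable_pushforward.
Local Open Scope ereal_scope.
Context d1 d2 (X : measurableType d1) (Y : measurableType d2) (R : realType).
Variables (mu : {measure set X -> \bar R}) (phi : X -> Y).
Hypothesis mphi : measurable_fun setT phi.

Lemma integrable_comp_pushforward (f : Y -> \bar R) :
  (pushforward mu phi).-integrable setT f -> mu.-integrable setT (f \o phi).
Proof.
move=> /integrableP[mf intf]; apply/integrableP; split.
  exact: measurableT_comp.
rewrite (_ : \int[mu]_x _ = \int[pushforward mu phi]_y `|f y|)//.
rewrite (ge0_integral_pushforward mphi)// ?preimage_setT//.
exact: measurableT_comp.
Qed.

End integrable_pushforward.

Section additively_separable.
Local Open Scope ereal_scope.
Context d1 d2 (T1 : measurableType d1) (T2 : measurableType d2) (R : realType).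
Variables (m1 : {finite_measure set T1 -> \bar R})
  (m2 : {finite_measure set T2 -> \bar R}) (u : T1 -> R) (v : T2 -> R).
Hypothesis int_uv : (m1 \x m2).-integrable setT (fun z => (u z.1 + v z.2)%:E).

(* By Fubini, x |-> u x + v y is m1-integrable for some y; subtract v y. *)
Lemma integrable_separable_fst : 0 < m2 setT -> m1.-integrable setT (EFin \o u).
Proof.
move=> m2_gt0; have ae2 := ae_properfilter_algebraOfSetsType m2_gt0.
have [y /= inty] := filter_ex (ae_integrable2 int_uv).
have -> : EFin \o u = (fun x => (u x + v y)%:E - (v y)%:E).
  by apply/funext => x /=; rewrite -EFinB addrK.
exact/integrableB/finite_measure_integrable_cst.
Qed.

Lemma integrable_separable_snd : 0 < m1 setT -> m2.-integrable setT (EFin \o v).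
Proof.
move=> m1_gt0; have ae1 := ae_properfilter_algebraOfSetsType m1_gt0.
have [x /= intx] := filter_ex (ae_integrable1 int_uv).
have -> : EFin \o v = (fun y => (u x + v y)%:E - (u x)%:E).
  by apply/funext => y /=; rewrite -EFinB [(u x + _)%R]addrC addrK.
exact/integrableB/finite_measure_integrable_cst.
Qed.

End additively_separable.

Section log_ratio_inequality.
Context (R : realType).
Implicit Types a b : R.

Lemma sub_mul_ln_sub_ge0 a b : 0 < a -> 0 < b -> 0 <= (a - b) * (ln a - ln b).
Proof.
move=> a0 b0; have [ab|ba] := leP a b.
- have : ln a <= ln b by rewrite ler_ln ?posrE.
  by move=> lnab; apply: mulr_le0; lra.
- have : ln b < ln a by rewrite ltr_ln ?posrE.
  by move=> lnba; apply: mulr_ge0; lra.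
Qed.

Lemma sub_mul_ln_sub_eq0 a b : 0 < a -> 0 < b ->
  (a - b) * (ln a - ln b) = 0 -> a = b.
Proof.
move=> a0 b0 /eqP; rewrite mulf_eq0 !subr_eq0 => /orP[/eqP //|/eqP].
by apply: ln_inj; rewrite posrE.
Qed.

End log_ratio_inequality.

Section equal_densities.
Local Open Scope ereal_scope.
Context d (T : measurableType d) (R : realType).
Variables (mu : {sigma_finite_measure set T -> \bar R})
  (nu1 nu2 : {finite_measure set T -> \bar R}) (g1 g2 : T -> R).
Hypotheses (mg1 : measurable_fun setT g1) (mg2 : measurable_fun setT g2)
  (g1_gt0 : forall x, (0 < g1 x)%R) (g2_gt0 : forall x, (0 < g2 x)%R)
  (nu1E : forall A, measurable A -> nu1 A = \int[mu]_(x in A) (g1 x)%:E)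
  (nu2E : forall A, measurable A -> nu2 A = \int[mu]_(x in A) (g2 x)%:E).
Variable h : T -> R.
Hypotheses (int1h : nu1.-integrable setT (EFin \o h))
  (int2h : nu2.-integrable setT (EFin \o h))
  (eq_int : \int[nu1]_x (h x)%:E = \int[nu2]_x (h x)%:E)
  (hE : {ae mu, forall x, (ln (g1 x) - ln (g2 x))%R = h x}).

Let k x := ((g1 x - g2 x) * (ln (g1 x) - ln (g2 x)))%R.

Let mk : measurable_fun setT k.
Proof.
by apply: measurable_funM; apply: measurable_funB => //;
  apply: measurableT_comp => //; exact: measurable_ln.
Qed.

Let integral_k : \int[mu]_x (k x)%:E = 0.
Proof.
have g1_ge0 x : (0 <= g1 x)%R by exact: ltW.
have g2_ge0 x : (0 <= g2 x)%R by exact: ltW.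
have int1 := integrable_density mg1 g1_ge0 nu1E int1h.
have int2 := integrable_density mg2 g2_ge0 nu2E int2h.
transitivity (\int[mu]_x ((EFin \o h) x * (g1 x)%:E - (EFin \o h) x * (g2 x)%:E)).
  apply: ae_eq_integral => //.
  - exact/measurable_EFinP.
  - exact: emeasurable_funB (measurable_int _ int1) (measurable_int _ int2).
  - apply: filterS hE => x hx _; rewrite /k /= hx -!EFinM -EFinB.
    by congr (_%:E); lra.
apply: eq_trans (integralB measurableT int1 int2) _.
rewrite (integral_density mg1 g1_ge0 nu1E int1h).
rewrite (integral_density mg2 g2_ge0 nu2E int2h).
by rewrite eq_int subee// integrable_fin_num.
Qed.

Lemma density_eq_of_log_ratio : {ae mu, forall x, g1 x = g2 x}.
Proof.
have k_ge0 x : (0 <= k x)%R by exact: sub_mul_ln_sub_ge0.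
have : ae_eq mu setT (EFin \o k) (cst 0).
  apply/(ae_eq_integral_abs mu measurableT); first exact/measurable_EFinP.
  by under eq_integral do rewrite gee0_abs ?lee_fin//.
apply: filterS => x /(_ I) [] /sub_mul_ln_sub_eq0; exact.
Qed.

End equal_densities.

HB.instance Definition _ d1 d2 (T1 : measurableType d1) (T2 : measurableType d2) :=
  isMeasurableFun.Build _ _ _ _ (@fst T1 T2) measurable_fst.
HB.instance Definition _ d1 d2 (T1 : measurableType d1) (T2 : measurableType d2) :=
  isMeasurableFun.Build _ _ _ _ (@snd T1 T2) measurable_snd.

Section marginals.
Local Open Scope ereal_scope.
Context (R : realType) (d1 d2 : measure_display)
  (TX : measurableType d1) (TY : measurableType d2).

Section probability_instances.
Variable P : probability (TX * TY)%type R.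

HB.instance Definition _ := Probability.copy (margX P) (distribution P fst).
HB.instance Definition _ := Probability.copy (margY P) (distribution P snd).
HB.instance Definition _ := Probability.copy (PXY P) (margX P \x margY P).

End probability_instances.

Lemma PXY_eq (P1 P2 : probability (TX * TY)%type R) :
  (forall A, measurable A -> margX P1 A = margX P2 A) ->
  (forall B, measurable B -> margY P1 B = margY P2 B) ->
  forall C, measurable C -> PXY P1 C = PXY P2 C.
Proof.
move=> eqX eqY C mC; rewrite /PXY /product_measure1.
transitivity (\int[margX P1]_x (margY P2 \o xsection C) x).
  by apply: eq_integral => x _ /=; rewrite eqY//; exact: measurable_xsection.
by apply: eq_measure_integral => A mA _; exact: eqX.
Qed.

Lemma integral_separable (P : probability (TX * TY)%type R)
    (u : TX -> R) (v : TY -> R) :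
  (margX P).-integrable setT (EFin \o u) ->
  (margY P).-integrable setT (EFin \o v) ->
  P.-integrable setT (fun z => (u z.1 + v z.2)%:E) /\
  \int[P]_z (u z.1 + v z.2)%:E =
    \int[margX P]_x (u x)%:E + \int[margY P]_y (v y)%:E.
Proof.
move=> intu intv.
have intu1 := integrable_comp_pushforward measurable_fst intu.
have intv2 := integrable_comp_pushforward measurable_snd intv.
split; first exact: (integrableD _ intu1 intv2).
rewrite (integralD_EFin measurableT intu1 intv2).
by rewrite !integral_pushforward//; [exact: measurable_int intv|exact: measurable_int intu].
Qed.

End marginals.

Definition log_ratio (T : Type) (R : realType) (p1 p2 : T -> R) (z : T) : R :=
  ln (p1 z) - ln (p2 z).

Section odds_ratio.
Context (R : realType) (d1 d2 : measure_display)
  (TX : measurableType d1) (TY : measurableType d2) (x0 : TX) (y0 : TY).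

Lemma ln_OR (p : TX * TY -> R) z : (forall w, 0 < p w) ->
  ln (OR x0 y0 p z) =
    ln (p z) + ln (p (x0, y0)) - ln (p (z.1, y0)) - ln (p (x0, z.2)).
Proof.
move=> p_gt0.
rewrite /OR lnM ?lnV ?lnM ?posrE ?mulr_gt0 ?invr_gt0 ?mulr_gt0//.
lra.
Qed.

Lemma log_ratio_separable_of_OR_eq (p1 p2 : TX * TY -> R) z :
  (forall w, 0 < p1 w) -> (forall w, 0 < p2 w) ->
  OR x0 y0 p1 z = OR x0 y0 p2 z ->
  log_ratio p1 p2 z = log_ratio p1 p2 (z.1, y0) - log_ratio p1 p2 (x0, y0)
                      + log_ratio p1 p2 (x0, z.2).
Proof.
move=> p1_gt0 p2_gt0 /(congr1 (@ln R)); rewrite !ln_OR// /log_ratio; lra.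
Qed.

End odds_ratio.

Section odds_ratio_determines_density.
Local Open Scope ereal_scope.
Context (R : realType) (d1 d2 : measure_display)
  (TX : measurableType d1) (TY : measurableType d2) (x0 : TX) (y0 : TY)
  (P1 P2 : probability (TX * TY)%type R) (p1 p2 : TX * TY -> R).
Hypotheses (Pf1 : Pf_density P1 p1) (Pf2 : Pf_density P2 p2)
  (eqX : forall A, measurable A -> margX P1 A = margX P2 A)
  (eqY : forall B, measurable B -> margY P1 B = margY P2 B)
  (eqOR : {ae PXY P1, forall z, OR x0 y0 p1 z = OR x0 y0 p2 z}).

Lemma density2_wrt_PXY1 A : measurable A ->
  P2 A = \int[PXY P1]_(z in A) (p2 z)%:E.
Proof.
have [[_ _ _ _ P2E] _] := Pf2.
move=> mA; rewrite P2E//; apply: eq_measure_integral => B mB _.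
by symmetry; exact: PXY_eq.
Qed.

Let r := log_ratio p1 p2.
Let u x := (r (x, y0) - r (x0, y0))%R.
Let v y := r (x0, y).

Let measurable_r : measurable_fun setT r.
Proof.
have [[_ _ mp1 _ _] _] := Pf1; have [[_ _ mp2 _ _] _] := Pf2.
by apply: measurable_funB; apply: measurableT_comp => //; exact: measurable_ln.
Qed.

Let integrable_r : (PXY P1).-integrable setT (EFin \o r).
Proof.
have [_ intln1] := Pf1; have [_ intln2] := Pf2.
have intln2' : (PXY P1).-integrable setT (fun z => (ln (p2 z))%:E).
  by apply: eq_measure_integrable intln2 => A mA; symmetry; exact: PXY_eq.
apply: (eq_integrable measurableT _ _ _ (integrableB measurableT intln1 intln2')).
by move=> z _; rewrite /= -EFinB.
Qed.

Let separable_r : {ae PXY P1, forall z, r z = (u z.1 + v z.2)%R}.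
Proof.
have [[_ _ _ p1_gt0 _] _] := Pf1; have [[_ _ _ p2_gt0 _] _] := Pf2.
by apply: filterS eqOR => z; exact: log_ratio_separable_of_OR_eq.
Qed.

Let integrable_u_v : (margX P1).-integrable setT (EFin \o u) /\
  (margY P1).-integrable setT (EFin \o v).
Proof.
have int_uv : (PXY P1).-integrable setT (fun z => (u z.1 + v z.2)%:E).
  apply: ae_eq_integrable integrable_r.
    apply/measurable_EFinP; apply: measurable_funD.
    - apply: measurableT_comp => //; apply: measurable_funB => //.
      by apply: measurableT_comp measurable_r _; exact: pair2_measurable.
    - apply: measurableT_comp => //; apply: measurableT_comp measurable_r _.
      exact: pair1_measurable.
  by apply: filterS separable_r => z rz _; rewrite /= rz.
split.
- apply: integrable_separable_fst int_uv _.
  by have := probability_setT (margY P1) => /= ->.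
- apply: integrable_separable_snd int_uv _.
  by have := probability_setT (margX P1) => /= ->.
Qed.

Lemma ae_density_eq : {ae PXY P1, forall z, p1 z = p2 z}.
Proof.
have [[_ _ mp1 p1_gt0 P1E] _] := Pf1; have [[_ _ mp2 p2_gt0 _] _] := Pf2.
have [intu intv] := integrable_u_v.
have [int1 E1] := integral_separable intu intv.
have [int2 E2] := integral_separable (eq_measure_integrable eqX intu)
  (eq_measure_integrable eqY intv).
apply: (density_eq_of_log_ratio mp1 mp2 p1_gt0 p2_gt0 P1E density2_wrt_PXY1
  int1 int2 _ separable_r).
rewrite E1 E2; congr (_ + _); apply: eq_measure_integral => A mA _.
- exact: eqX.
- exact: eqY.
Qed.

End odds_ratio_determines_density.

Theorem theorem1 (R : realType) (d1 d2 : measure_display)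
  (TX : measurableType d1) (TY : measurableType d2)
  (x0 : TX) (y0 : TY)
  (P1 P2 : probability (TX * TY)%type R) (p1 p2 : TX * TY -> R) :
  Pf_density P1 p1 -> Pf_density P2 p2 ->
  (forall A : set TX, measurable A -> margX P1 A = margX P2 A) ->
  (forall B : set TY, measurable B -> margY P1 B = margY P2 B) ->
  {ae PXY P1, forall z, OR x0 y0 p1 z = OR x0 y0 p2 z} ->
  forall C : set (TX * TY), measurable C -> P1 C = P2 C.
Proof.
move=> Pf1 Pf2 eqX eqY eqOR C mC.
have [[_ _ mp1 _ P1E] _] := Pf1; have [[_ _ mp2 _ _] _] := Pf2.
rewrite P1E// (density2_wrt_PXY1 Pf2 eqX eqY mC).
apply: ae_eq_integral => //; [exact/measurable_funTS/measurable_EFinP..|].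
by apply: filterS (ae_density_eq Pf1 Pf2 eqX eqY eqOR) => z ->.
Qed.
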